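(* Let $B,M,K,L$ be positive integers, $N=BM$, and let $P>0$ and $C>0$. Let $a_{bk}>0$ ($b=1,\dots,B$, $k=1,\dots,K$) and define $v_{ij}=a_{\lceil i/M\rceil j}$ for $i=1,\dots,N$, $j=1,\dots,K$. Define $$\sigma_i^2=\frac{1+\frac{P}{L}\sum_{j=1}^K v_{ij}}{2^{C/(ML)}-1},$$ and for $\tau\ge 0$ $$\hat v_{ij}(\tau)=\frac{\tau\frac{P}{L}v_{ij}^2}{\tau\frac{P}{L}v_{ij}+1+\sigma_i^2},\qquad \tilde v_{ij}(\tau)=\frac{v_{ij}(1+\sigma_i^2)}{\tau\frac{P}{L}v_{ij}+1+\sigma_i^2},\qquad \overline v_{ij}(\tau)=\frac{\hat v_{ij}(\tau)}{1+\sigma_i^2+\frac{P}{L}\sum_{\ell=1}^K\tilde v_{i\ell}(\tau)}.$$ Let $\mathbf D_j(\tau)=\mathrm{diag}(\overline v_{1j}(\tau),\dots,\overline v_{Nj}(\tau))$ and $\mathbf D_j'(\tau)=\frac{d}{d\tau}\mathbf D_j(\tau)=\mathrm{diag}(\overline v'_{1j}(\tau),\dots,\overline v'_{Nj}(\tau))$ for $j=1,\dots,K$. Let $\tau>0$ and assume $0\le \overline v_{ij}(\tau)<v_{\max}<\infty$ for all $i,j$. Let $\mathbf T(z)$ be the $N\times N$ diagonal matrix-valued function defined in the context, let $\mathbf T_P=\mathbf T(-\frac{L}{KP})$, and let $$\overline R(\tau)=\frac1N\sum_{j=1}^K\log\Big(1+\tfrac1K\mathrm{tr}\,\mathbf D_j(\tau)\mathbf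 T_P\Big)-\frac1N\log\det\Big(\tfrac{L}{KP}\mathbf T_P\Big)-\frac1N\sum_{j=1}^K\frac{\frac1K\mathrm{tr}\,\mathbf D_j(\tau)\mathbf T_P}{1+\frac1K\mathrm{tr}\,\mathbf D_j(\tau)\mathbf T_P}$$ (where $\mathbf T_P$ depends on $\tau$ through the $\mathbf D_j(\tau)$). Then $$\overline R'(\tau)=\frac1N\sum_{j=1}^K\frac{\frac1K\mathrm{tr}\,\mathbf D'_j(\tau)\mathbf T_P}{1+\frac1K\mathrm{tr}\,\mathbf D_j(\tau)\mathbf T_P},$$ and moreover $\overline R'(\tau)>0$ for all $P,\tau>0$.
   Context: $\log$ is the natural logarithm. Let $\mathbb C_+=\{z\in\mathbb C:\Im z>0\}$ and let $\mathcal S$ be the class of functions $f$ analytic on $\mathbb C\setminus\mathbb R_+$ such that $f(z)\in\mathbb C_+$ and $zf(z)\in\mathbb C_+$ for $z\in\mathbb C_+$, and $\lim_{y\to\infty}-\mathrm{i}y f(\mathrm{i}y)=1$. For fixed $\tau$, $\mathbf T(z)=\mathrm{diag}(t_1(z),\dots,t_N(z))$ denotes the unique solution with $(t_1,\dots,t_N)\in\mathcal S^N$ of $$\mathbf T(z)=\Big(\frac1K\sum_{j=1}^K\frac{\mathbf D_j(\tau)}{1+\frac1K\mathrm{tr}\,\mathbf D_j(\tau)\mathbf T(z)}-z\mathbf I_N\Big)^{-1}.$$ (Interpretation: $a_{bk}$ is the inverse path loss between user $k$ and base station $b$, each base station has $M$ antennas, $L$ sub-carriers, power $P$, backhaul capacity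 $C$, training length $\tau$.) *)

From HB Require Import structures.
From mathcomp Require Import all_boot all_order all_algebra.
From mathcomp Require Import all_classical all_reals all_analysis.
From mathcomp Require Import complex.
Import Order.TTheory GRing.Theory Num.Theory numFieldNormedType.Exports.

Set Implicit Arguments.
Unset Strict Implicit.
Unset Printing Implicit Defensive.

Local Open Scope classical_set_scope.
Local Open Scope ring_scope.
Local Open Scope complex_scope.

(* Block index: antenna i (0-based, i < B*M) belongs to base station
   i %/ M (0-based), i.e. ceil((i+1)/M) in 1-based indexing. *)
Lemma blk_proof (B M : nat) (i : 'I_(B * M)) : (i %/ M < B)%N.
Proof.
have := ltn_ord i; move: (nat_of_ord i) => n; clear i.
case: M => [|M]; first by rewrite muln0.
by rewrite ltn_divLR.
Qed.

Definition blk (B M : nat) (i : 'I_(B * M)) : 'I_B := Ordinal (blk_proof i).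

(* The class S of the paper: f analytic (complex differentiable) on C \ R_+,
   f(z) in C_+ and z f(z) in C_+ for z in C_+, and -iy f(iy) -> 1 as y -> +oo. *)
Definition in_S (R : realType) (f : R[i] -> R[i]) : Prop :=
  [/\ (forall z : R[i], ~ (complex.Im z = 0 /\ 0 <= complex.Re z) ->
         derivable (f : (R[i])^o -> (R[i])^o) z 1),
      (forall z : R[i], 0 < complex.Im z -> 0 < complex.Im (f z) /\ 0 < complex.Im (z * f z)) &
      (- 'i * y%:C * f ('i * y%:C)) @[y --> +oo] --> (1 : (R[i])^o)].

Unset Implicit Arguments.
Section Model.
Variables (R : realType) (B M K L : nat) (P C : R) (a : 'I_B -> 'I_K -> R).
Local Notation N := (B * M)%N.

Definition vv (i : 'I_N) (j : 'I_K) : R := a (blk i) j.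

Definition sigma2 (i : 'I_N) : R :=
  (1 + P / L%:R * \sum_(j < K) vv i j) / (2 `^ (C / (M * L)%:R) - 1).

Definition vhat (tau : R) (i : 'I_N) (j : 'I_K) : R :=
  tau * (P / L%:R) * vv i j ^+ 2 / (tau * (P / L%:R) * vv i j + 1 + sigma2 i).

Definition vtil (tau : R) (i : 'I_N) (j : 'I_K) : R :=
  vv i j * (1 + sigma2 i) / (tau * (P / L%:R) * vv i j + 1 + sigma2 i).

Definition vbar (tau : R) (i : 'I_N) (j : 'I_K) : R :=
  vhat tau i j / (1 + sigma2 i + P / L%:R * \sum_(l < K) vtil tau i l).

Definition Dm (tau : R) (j : 'I_K) : 'M[R]_N := diag_mx (\row_i vbar tau i j).
Definition Dm' (tau : R) (j : 'I_K) : 'M[R]_N :=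
  diag_mx (\row_i derive1 (fun s => vbar s i j) tau).

Definition Tmat (t : R -> 'I_N -> R[i] -> R[i]) (tau : R) (z : R[i]) : 'M[R[i]]_N :=
  diag_mx (\row_i t tau i z).

Definition DmC (tau : R) (j : 'I_K) : 'M[R[i]]_N := map_mx (real_complex R) (Dm tau j).

Definition is_T_solution (t : R -> 'I_N -> R[i] -> R[i]) (tau : R) : Prop :=
  (forall i, in_S (t tau i)) /\
  forall z : R[i], ~ (complex.Im z = 0 /\ 0 <= complex.Re z) ->
    Tmat t tau z =
    invmx ((K%:R)^-1 *: (\sum_(j < K)
              ((1 + (K%:R)^-1 * \tr (DmC tau j *m Tmat t tau z))^-1 *: DmC tau j))
           - z%:M).

(* T_P = T(-L/(KP)), a real (positive) diagonal matrix *)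
Definition TP (t : R -> 'I_N -> R[i] -> R[i]) (tau : R) : 'M[R]_N :=
  diag_mx (\row_i complex.Re (t tau i ((- (L%:R / (K%:R * P)))%:C))).

Definition Rbar (t : R -> 'I_N -> R[i] -> R[i]) (tau : R) : R :=
  (N%:R)^-1 * \sum_(j < K) ln (1 + (K%:R)^-1 * \tr (Dm tau j *m TP t tau))
  - (N%:R)^-1 * ln (\det ((L%:R / (K%:R * P)) *: TP t tau))
  - (N%:R)^-1 * \sum_(j < K)
      ((K%:R)^-1 * \tr (Dm tau j *m TP t tau)
       / (1 + (K%:R)^-1 * \tr (Dm tau j *m TP t tau))).

End Model.

From HB Require Import structures.
From mathcomp Require Import all_boot all_order all_algebra.
From mathcomp Require Import all_classical all_reals all_analysis.
From mathcomp Require Import complex lra ring.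
Import Order.TTheory GRing.Theory Num.Theory numFieldNormedType.Exports.

(* With c = L/(KP), d = vbar(tau) and e_j(x) = (1/K) sum_i d_ij x_i, the diagonal x
   of T_P is a positive fixed point x_i = 1/(A_i(x) + c),
   A_i(x) = (1/K) sum_j d_ij / (1 + e_j(x)): a function of class S is real and
   nonnegative on the negative half-line, and the equation defining T at z = -c is
   then the fixed-point equation.  Fixed points minimize the convex potential
     Phi_d(x) = sum_j ln (1 + e_j(x)) - sum_i ln (c x_i) + c sum_i x_i - N,
   and Rbar(tau) = Phi_d(x)/N because sum_j e_j/(1 + e_j) = N - c sum_i x_i.
   Minimality sandwiches Phi_{d(tau+h)}(x(tau+h)) - Phi_{d(tau)}(x(tau)) between the
   increments of sum_j ln (1 + e_j) at x(tau+h) and at x(tau) alone (envelope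
   theorem).  The fixed point depends continuously on d, so both bounds divided by h
   tend to sum_j e_j(d'(tau)) / (1 + e_j), which is positive because every vbar_ij
   increases with tau. *)

Local Open Scope ring_scope.

Section FixedPoint.
Variables (R : realType) (n k : nat).
Implicit Types (c : R) (d q w : 'I_n -> 'I_k -> R) (x y : 'I_n -> R).

(* For T = diag x, [etr d x j] is e_j(x) = K^-1 tr (D_j T) and [eff d x i] is A_i(x). *)
Definition etr d x j : R := k%:R^-1 * \sum_(i < n) d i j * x i.

Definition eff d x i : R := k%:R^-1 * \sum_(j < k) (1 + etr d x j)^-1 * d i j.

Definition is_fixpoint c d x := forall i, 0 < x i /\ x i = (eff d x i + c)^-1.

Definition potential c d x : R :=
  \sum_(j < k) ln (1 + etr d x j) - \sum_(i < n) ln (c * x i)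
  + c * \sum_(i < n) x i - n%:R.

Definition slope q x w : R := \sum_(j < k) etr q x j / (1 + etr w x j).

Lemma etr_ge0 d x : (forall i j, 0 <= d i j) -> (forall i, 0 <= x i) ->
  forall j, 0 <= etr d x j.
Proof.
move=> d0 x0 j; rewrite mulr_ge0 ?invr_ge0 ?ler0n // sumr_ge0 // => i _.
exact: mulr_ge0.
Qed.

Lemma eff_ge0 d x i : (forall i j, 0 <= d i j) -> (forall j, 0 <= etr d x j) ->
  0 <= eff d x i.
Proof.
move=> d0 E0; rewrite mulr_ge0 ?invr_ge0 ?ler0n // sumr_ge0 // => j _.
by rewrite mulr_ge0 // invr_ge0 addr_ge0.
Qed.

Lemma expR_tangent_le (y m : R) : expR m * (1 + y - m) <= expR y.
Proof.
have -> : expR y = expR m * expR (y - m) by rewrite -expRD addrC subrK.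
by rewrite -addrA ler_pM2l ?expR_gt0 // expR_ge1Dx.
Qed.

Lemma ln_jensen (s : R) (a y : 'I_n -> R) :
  0 < s -> (forall i, 0 <= a i) ->
  (\sum_i a i * y i) / (s + \sum_i a i) <=
  ln (s + \sum_i a i * expR (y i)) - ln (s + \sum_i a i).
Proof.
move=> s0 a0.
have T0 : 0 < s + \sum_i a i by rewrite ltr_pwDl // sumr_ge0.
set T := s + \sum_i a i; set m := (\sum_i a i * y i) / T.
(* the tangent line of expR at m lies below expR at 0 and at every y i *)
have key : expR m * T <= s + \sum_i a i * expR (y i).
  have eT : m * T = \sum_i a i * y i by rewrite /m divfK // gt_eqF.
  have -> : expR m * T = s * (expR m * (1 + 0 - m))
                         + \sum_i a i * (expR m * (1 + y i - m)).
    rewrite (_ : \sum_i _ = expR m * (\sum_i a i + \sum_i a i * y i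
                                      - m * \sum_i a i)); first by rewrite -eT /T; ring.
    transitivity (\sum_i expR m * (a i + a i * y i - m * a i)).
      by apply: eq_bigr => i _; ring.
    by rewrite -mulr_sumr sumrB big_split /= mulr_sumr.
  apply: lerD; last by apply: ler_sum => i _; exact/ler_wpM2l/expR_tangent_le.
  by rewrite -[leRHS]mulr1 ler_pM2l // -[leRHS]expR0 expR_tangent_le.
have pm : 0 < expR m * T by rewrite mulr_gt0 // expR_gt0.
have : ln (expR m * T) <= ln (s + \sum_i a i * expR (y i)).
  by rewrite ler_ln ?posrE // (lt_le_trans pm key).
by rewrite lnM ?posrE ?expR_gt0 // expRK; lra.
Qed.

Lemma ln_etr_expR_ge d x (l : 'I_n -> R) :
  (forall i j, 0 <= d i j) -> (forall i, 0 < x i) ->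
  \sum_i x i * eff d x i * l i <=
  \sum_j ln (1 + etr d (fun i => x i * expR (l i)) j) - \sum_j ln (1 + etr d x j).
Proof.
move=> d0 x0; rewrite -sumrB.
have -> : \sum_i x i * eff d x i * l i =
    \sum_j \sum_i k%:R^-1 * d i j * x i * l i / (1 + etr d x j).
  rewrite exchange_big; apply: eq_bigr => i _ /=.
  by rewrite /eff !mulr_sumr mulr_suml; apply: eq_bigr => j _; ring.
apply: ler_sum => j _.
have a0 i : 0 <= k%:R^-1 * d i j * x i by rewrite !mulr_ge0 ?invr_ge0 ?ler0n // ltW.
have := @ln_jensen 1 _ l ltr01 a0.
have -> : \sum_i k%:R^-1 * d i j * x i = etr d x j.
  by rewrite /etr mulr_sumr; apply: eq_bigr => i _; rewrite mulrA.
have -> : \sum_i k%:R^-1 * d i j * x i * expR (l i) = etr d (fun i => x i * expR (l i)) j.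
  by rewrite /etr mulr_sumr; apply: eq_bigr => i _; rewrite !mulrA.
by rewrite mulr_suml.
Qed.

(* Write x = x0 exp(l): Jensen for the ln (1 + e_j) and exp l >= 1 + l bound the
   increment of the potential below by a linear form in l, which vanishes at a fixed
   point. *)
Lemma potential_fixpoint_min c d x0 x :
  0 < c -> (forall i j, 0 <= d i j) -> is_fixpoint c d x0 -> (forall i, 0 < x i) ->
  potential c d x0 <= potential c d x.
Proof.
move=> c0 d0 fx x_gt0.
have x0_gt0 i : 0 < x0 i := (fx i).1.
pose l i := ln (x i / x0 i).
have xE i : x i = x0 i * expR (l i).
  by rewrite /l lnK ?posrE ?divr_gt0 // mulrC divfK // gt_eqF.
have J := @ln_etr_expR_ge d x0 l d0 x0_gt0.
rewrite (_ : (fun i => _) = x) in J; last by apply/funext => i; rewrite xE.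
have Sln : \sum_i ln (c * x i) = \sum_i ln (c * x0 i) + \sum_i l i.
  rewrite -big_split; apply: eq_bigr => i _ /=.
  by rewrite xE mulrA lnM ?posrE ?mulr_gt0 ?expR_gt0 // expRK.
have Sx : c * \sum_i x0 i + c * \sum_i x0 i * l i <= c * \sum_i x i.
  rewrite -mulrDr ler_pM2l // -big_split; apply: ler_sum => i _ /=.
  by rewrite xE -[X in X + _]mulr1 -mulrDr ler_pM2l // expR_ge1Dx.
have Z : \sum_i x0 i * eff d x0 i * l i - \sum_i l i + c * \sum_i x0 i * l i = 0.
  rewrite mulr_sumr -sumrB -big_split big1 // => i _ /=.
  have e : x0 i * (eff d x0 i + c) = 1.
    by rewrite {1}(fx i).2 mulVf // gt_eqF // -invr_gt0 -(fx i).2.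
  transitivity ((x0 i * (eff d x0 i + c) - 1) * l i); first by ring.
  by rewrite e subrr mul0r.
rewrite /potential; lra.
Qed.

Lemma etr_le_scale d d' x x' (al b : R) j :
  (forall i j, 0 <= d' i j) -> (forall i, 0 <= x' i) ->
  (forall i j, d' i j <= al * d i j) -> (forall i, x' i <= b * x i) ->
  etr d' x' j <= al * b * etr d x j.
Proof.
move=> d0 x0 du xb; rewrite /etr mulrCA; apply: ler_wpM2l; first by rewrite invr_ge0.
rewrite mulr_sumr; apply: ler_sum => i _.
rewrite (_ : al * b * (d i j * x i) = (al * d i j) * (b * x i)); last by ring.
exact: ler_pM.
Qed.

Lemma eff_le_rowmean d x i : (forall i j, 0 <= d i j) -> (forall j, 0 <= etr d x j) ->
  eff d x i <= k%:R^-1 * \sum_j d i j.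
Proof.
move=> d0 E0; apply: ler_wpM2l; first by rewrite invr_ge0.
apply: ler_sum => j _; apply: ler_piMl => //.
by rewrite invf_le1 ?lerDl //; have := E0 j; lra.
Qed.

Lemma eff_ge_scale d d' x x' (al b : R) i :
  0 < al -> 0 < b -> 1 <= al * b -> (forall i j, 0 <= d i j) ->
  (forall i j, d i j <= al * d' i j) ->
  (forall j, 0 <= etr d x j) -> (forall j, 0 <= etr d' x' j) ->
  (forall j, etr d' x' j <= al * b * etr d x j) ->
  eff d x i / (al * al * b) <= eff d' x' i.
Proof.
move=> al0 b0 ab1 d0 dl E0 E0' E'.
rewrite /eff -(mulrA k%:R^-1); apply: ler_wpM2l; first by rewrite invr_ge0.
rewrite mulr_suml; apply: ler_sum => j _.
have p0 : 0 < 1 + etr d x j by have := E0 j; lra.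
have p1 : 0 < 1 + etr d' x' j by have := E0' j; lra.
have p2 : 0 < al * b * (1 + etr d x j) by rewrite mulr_gt0 // (lt_le_trans ltr01 ab1).
have h1 : (al * b * (1 + etr d x j))^-1 <= (1 + etr d' x' j)^-1.
  rewrite lef_pV2 ?posrE // mulrDr mulr1.
  by apply: le_trans (_ : 1 + al * b * etr d x j <= _); rewrite ?lerD2l ?lerD2r.
rewrite (_ : _ / _ = (al * b * (1 + etr d x j))^-1 * (d i j / al)); last first.
  by field; rewrite (gt_eqF al0) (gt_eqF p0) (gt_eqF b0).
apply: ler_pM => //; first by rewrite invr_ge0 ltW.
  by rewrite divr_ge0 // ltW.
by rewrite ler_pdivrMr // mulrC.
Qed.

Lemma fixpoint_ratio_le (A A' b c q S : R) :
  0 < c -> 1 <= q -> 1 < b -> 0 <= A -> A <= S -> A / (q * b) <= A' ->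
  b * (A + c)^-1 = (A' + c)^-1 -> b <= 1 + (q - 1) * S / c.
Proof.
move=> c0 q1 b1 A0 AS AA' e.
have q0 : 0 < q := lt_le_trans ltr01 q1.
have b0 : 0 < b := lt_trans ltr01 b1.
have w0 : 0 <= A / (q * b) by rewrite divr_ge0 // ltW // mulr_gt0.
have Ac : A + c != 0 by rewrite gt_eqF //; lra.
have A'c : A' + c != 0 by rewrite gt_eqF //; lra.
have eb : b * (A' + c) = A + c by rewrite -[b](divfK Ac) e mulrAC mulVf // mul1r.
set p := b * (A / (q * b)).
have pq : p * q = A by rewrite /p; field; rewrite (gt_eqF q0) (gt_eqF b0).
have h1 : p + b * c <= A + c by rewrite /p -mulrDr -eb ler_wpM2l ?lerD2r // ltW.
have h2 : (q - 1) * p <= (q - 1) * S.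
  apply: ler_wpM2l; first by rewrite subr_ge0.
  by apply: le_trans AS; rewrite -pq ler_peMr // mulr_ge0 // ltW.
rewrite -lerBlDl ler_pdivlMr //; nra.
Qed.

(* Compare the two fixed-point equations at an index maximizing x'_i / x_i. *)
Lemma fixpoint_compare c d d' x x' (al S : R) :
  0 < c -> 1 <= al -> (forall i j, 0 <= d i j) ->
  (forall i j, d i j <= al * d' i j) -> (forall i j, d' i j <= al * d i j) ->
  (forall i, k%:R^-1 * \sum_j d i j <= S) ->
  is_fixpoint c d x -> is_fixpoint c d' x' ->
  forall i, x' i <= (1 + (al * al - 1) * S / c) * x i.
Proof.
move=> c0 al1 d0 dl du hS fx fx' i.
have al0 : 0 < al := lt_le_trans ltr01 al1.
have d0' i1 j : 0 <= d' i1 j.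
  by rewrite -(pmulr_rge0 _ al0); exact: le_trans (d0 i1 j) (dl i1 j).
have x0 i1 : 0 < x i1 := (fx i1).1.
have x0' i1 : 0 < x' i1 := (fx' i1).1.
pose F i1 := x' i1 / x i1.
have [i0 _ Fmax] := @arg_maxP _ _ _ i xpredT F isT.
set b := F i0 in Fmax.
have xb i1 : x' i1 <= b * x i1 by rewrite -ler_pdivrMr //; exact: Fmax.
have S0 : 0 <= S by apply: le_trans (hS i); rewrite mulr_ge0 ?invr_ge0 ?sumr_ge0.
have q1 : 1 <= al * al by rewrite -[1]mulr1 ler_pM.
suff bB : b <= 1 + (al * al - 1) * S / c.
  by apply: le_trans (xb i) _; rewrite ler_wpM2r // ltW.
have [b1|b1] := leP b 1.
  by apply: le_trans b1 _; rewrite lerDl divr_ge0 ?mulr_ge0 ?subr_ge0 // ltW.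
have b0 : 0 < b := lt_trans ltr01 b1.
have E0 := etr_ge0 _ _ d0 (fun i => ltW (x0 i)).
have E0' := etr_ge0 _ _ d0' (fun i => ltW (x0' i)).
have E' j : etr d' x' j <= al * b * etr d x j.
  by apply: etr_le_scale => // i1; exact: ltW.
apply: (@fixpoint_ratio_le (eff d x i0) (eff d' x' i0) b c (al * al) S c0 q1 b1
         (eff_ge0 _ _ i0 d0 E0)).
- exact: le_trans (eff_le_rowmean _ _ i0 d0 E0) (hS i0).
- by apply: eff_ge_scale => //; rewrite -[1]mulr1 ler_pM // ltW.
- by rewrite -(fx i0).2 -(fx' i0).2 /b /F divfK // gt_eqF.
Qed.

Lemma fixpoint_close c d d' x x' (g S : R) :
  0 < c -> 0 <= g <= 1 -> (forall i j, 0 <= d i j) ->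
  (forall i j, d i j <= (1 + g) * d' i j) -> (forall i j, d' i j <= (1 + g) * d i j) ->
  (forall i, k%:R^-1 * \sum_j d i j <= S) ->
  is_fixpoint c d x -> is_fixpoint c d' x' ->
  forall i, x' i <= (1 + 6 * g * S / c) * x i /\ x i <= (1 + 6 * g * S / c) * x' i.
Proof.
move=> c0 /andP[g0 g1] d0 dl du hS fx fx' i.
have al1 : 1 <= 1 + g by lra.
have d0' i1 j : 0 <= d' i1 j.
  by rewrite -(pmulr_rge0 _ (lt_le_trans ltr01 al1)); exact: le_trans (d0 i1 j) (dl i1 j).
have S0 : 0 <= S by apply: le_trans (hS i); rewrite mulr_ge0 ?invr_ge0 ?sumr_ge0.
have hS' i1 : k%:R^-1 * \sum_j d' i1 j <= 2 * S.
  apply: le_trans (_ : (1 + g) * (k%:R^-1 * \sum_j d i1 j) <= _).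
    rewrite mulrCA; apply: ler_wpM2l; first by rewrite invr_ge0.
    by rewrite mulr_sumr; apply: ler_sum => j _.
  have := hS i1; have : 0 <= k%:R^-1 * \sum_j d i1 j by rewrite mulr_ge0 ?invr_ge0 ?sumr_ge0.
  nra.
have scale (T : R) : 0 <= T -> T <= 2 * S ->
    (1 + (((1 + g) * (1 + g) - 1) * T) / c) <= 1 + 6 * g * S / c.
  move=> T0 TS; rewrite lerD2l; apply: ler_wpM2r; first by rewrite invr_ge0 ltW.
  have gT : g * T <= g * (2 * S) by rewrite ler_wpM2l.
  have ggT : g * (g * T) <= g * T by rewrite ler_piMl // mulr_ge0.
  nra.
split.
  apply: le_trans (@fixpoint_compare c d d' x x' (1 + g) S c0 al1 d0 dl du hS fx fx' i) _.
  by apply: ler_wpM2r; [exact: ltW (fx i).1 | apply: scale => //; lra].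
apply: le_trans (@fixpoint_compare c d' d x' x (1 + g) (2 * S) c0 al1 d0' du dl hS' fx' fx i) _.
by apply: ler_wpM2r; [exact: ltW (fx' i).1 | apply: scale => //; lra].
Qed.

Lemma ln_sub_bounds (u v : R) : 0 < u -> 0 < v ->
  (v - u) / v <= ln v - ln u <= (v - u) / u.
Proof.
have up (u' v' : R) : 0 < u' -> 0 < v' -> ln v' - ln u' <= (v' - u') / u'.
  move=> u0 v0; rewrite -ln_div ?posrE // mulrBl divff ?gt_eqF //.
  rewrite {1}(_ : v' / u' = 1 + (v' / u' - 1)); last by ring.
  by apply: le_ln1Dx; have := divr_gt0 v0 u0; lra.
move=> u0 v0; rewrite up // andbT.
have := up v u v0 u0; rewrite (_ : (u - v) / v = - ((v - u) / v)); first lra.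
by rewrite -mulNr opprB.
Qed.

Lemma ln1D_etr_sub_bounds d d' y :
  (forall i j, 0 <= d i j) -> (forall i j, 0 <= d' i j) -> (forall i, 0 < y i) ->
  \sum_j (etr d' y j - etr d y j) / (1 + etr d' y j)
  <= \sum_j ln (1 + etr d' y j) - \sum_j ln (1 + etr d y j)
  <= \sum_j (etr d' y j - etr d y j) / (1 + etr d y j).
Proof.
move=> d0 d0' y0; have y0' i := ltW (y0 i).
have E0 := etr_ge0 _ _ d0 y0'; have E0' := etr_ge0 _ _ d0' y0'.
rewrite -sumrB; apply/andP; split; apply: ler_sum => j _;
  have /andP[lo hi] := @ln_sub_bounds (1 + etr d y j) (1 + etr d' y j)
    (ltr_pwDl ltr01 (E0 j)) (ltr_pwDl ltr01 (E0' j));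
  by rewrite (_ : etr d' y j - _ = 1 + etr d' y j - (1 + etr d y j)) //; ring.
Qed.

(* Envelope argument: each fixed point minimizes its own potential. *)
Lemma potential_increment_bounds c d d' x x' :
  0 < c -> (forall i j, 0 <= d i j) -> (forall i j, 0 <= d' i j) ->
  is_fixpoint c d x -> is_fixpoint c d' x' ->
  \sum_j (etr d' x' j - etr d x' j) / (1 + etr d' x' j)
  <= potential c d' x' - potential c d x
  <= \sum_j (etr d' x j - etr d x j) / (1 + etr d x j).
Proof.
move=> c0 d0 d0' fx fx'.
have x0 i : 0 < x i := (fx i).1.
have x0' i : 0 < x' i := (fx' i).1.
have m1 := @potential_fixpoint_min c d' x' x c0 d0' fx' x0.
have m2 := @potential_fixpoint_min c d x x' c0 d0 fx x0'.
have /andP[_ hi] := ln1D_etr_sub_bounds _ _ _ d0 d0' x0.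
have /andP[lo _] := ln1D_etr_sub_bounds _ _ _ d0 d0' x0'.
move: m1 m2; rewrite /potential => m1 m2; apply/andP; split; lra.
Qed.

Lemma slope_scale (h : R) d d' y w : h != 0 ->
  h * slope (fun i j => (d' i j - d i j) / h) y w =
  \sum_j (etr d' y j - etr d y j) / (1 + etr w y j).
Proof.
move=> h0; rewrite /slope mulr_sumr; apply: eq_bigr => j _.
rewrite /etr -mulrBr -sumrB mulrA; congr (_ / _).
rewrite mulrCA; congr (_ * _); rewrite mulr_sumr; apply: eq_bigr => i _.
by field.
Qed.

Lemma fixpoint_sum_frac c d x : is_fixpoint c d x ->
  \sum_j etr d x j / (1 + etr d x j) = n%:R - c * \sum_i x i.
Proof.
move=> fx.
transitivity (\sum_i (1 - c * x i)); last by rewrite sumrB sumr_const card_ord mulr_sumr.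
rewrite (eq_bigr (fun j => \sum_i k%:R^-1 * d i j * x i / (1 + etr d x j))); last first.
  by move=> j _; rewrite /etr mulr_sumr mulr_suml; apply: eq_bigr => i _; ring.
rewrite exchange_big; apply: eq_bigr => i _ /=.
have [x0 xE] := fx i.
have e : x i * (eff d x i + c) = 1 by rewrite {1}xE mulVf // gt_eqF // -invr_gt0 -xE.
have -> : \sum_j k%:R^-1 * d i j * x i / (1 + etr d x j) = x i * eff d x i.
  by rewrite /eff !mulr_sumr; apply: eq_bigr => j _; ring.
by move: e; rewrite mulrDr; lra.
Qed.

Lemma slope_gt0 q x w : (0 < n)%N -> (0 < k)%N ->
  (forall i j, 0 < q i j) -> (forall i, 0 < x i) -> (forall j, 0 <= etr w x j) ->
  0 < slope q x w.
Proof.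
move=> n0 k0 q0 x0 E0.
have sum_gt0 m (f : 'I_m -> R) (i0 : 'I_m) :
    (forall i, 0 <= f i) -> 0 < f i0 -> 0 < \sum_i f i.
  by move=> f0 fi0; rewrite (bigD1 i0) //= ltr_wpDr // sumr_ge0.
have etr_gt0 j : 0 < etr q x j.
  apply: mulr_gt0; first by rewrite invr_gt0 ltr0n.
  apply: (sum_gt0 _ _ (Ordinal n0)) => [i|]; last exact: mulr_gt0.
  exact: ltW (mulr_gt0 (q0 i j) (x0 i)).
apply: (sum_gt0 _ _ (Ordinal k0)) => [j|].
  by apply: divr_ge0; [exact: ltW | exact: ltW (ltr_pwDl ltr01 (E0 j))].
by apply: divr_gt0; [exact: etr_gt0 | exact: ltr_pwDl ltr01 (E0 _)].
Qed.

End FixedPoint.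

Arguments etr {R n k}.
Arguments eff {R n k}.
Arguments is_fixpoint {R n k}.
Arguments potential {R n k}.
Arguments slope {R n k}.

Lemma ge0_of_small (R : realType) (a C dl : R) : 0 < dl -> 0 <= C ->
  (forall e, 0 < e -> e < dl -> - (C * e) < a) -> 0 <= a.
Proof.
move=> dl0 C0 small; rewrite leNgt; apply/negP => a0.
have C1 : 0 < C + 1 by lra.
set e := Num.min (dl / 2) (- a / (C + 1)).
have e0 : 0 < e by rewrite /e lt_min !divr_gt0 ?oppr_gt0.
have edl : e < dl by rewrite /e gt_min; apply/orP; left; lra.
have : e <= - a / (C + 1) by rewrite /e ge_min lexx orbT.
rewrite ler_pdivlMr // => ea.
have := small e e0 edl; have : C * e <= (C + 1) * e by rewrite ler_pM2r //; lra.
lra.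
Qed.

(* [f (x0 + i e) = f x0 + i e (ru + i iu)], where [ru + i iu] tends to
   [f' x0 = Re_D + i Im_D] and [f x0 = Re_f + i Im_f]; the last two conditions
   say that [f] and [z f] map the upper half plane into itself. *)
Section NegativeAxis.
Variables (R : realType) (x0 Re_f Im_f Re_D Im_D : R).
Hypothesis x0_lt0 : x0 < 0.
Hypothesis quot : forall et, 0 < et -> exists2 dl, 0 < dl & forall e, 0 < e -> e < dl ->
  exists ru iu, [/\ `|ru - Re_D| <= et, `|iu - Im_D| <= et,
    0 < Im_f + e * ru & 0 < x0 * (Im_f + e * ru) + e * (Re_f - e * iu)].

Lemma Im_f_ge0 : 0 <= Im_f.
Proof.
have [dl dl0 near_dl] := quot _ ltr01.
apply: (@ge0_of_small _ _ (`|Re_D| + 1) dl dl0 (addr_ge0 (normr_ge0 _) ler01)).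
move=> e e0 edl; have [ru [iu [ruD _ pos _]]] := near_dl e e0 edl.
have : ru <= `|Re_D| + 1.
  by move: ruD; rewrite ler_distl => /andP[_]; have := ler_norm Re_D; lra.
nra.
Qed.

Lemma x0_Im_f_ge0 : 0 <= x0 * Im_f.
Proof.
have [dl dl0 near_dl] := quot _ ltr01.
have /ler_normlP[ReD1 _] := lexx `|Re_D|.
have /ler_normlP[ImD1 _] := lexx `|Im_D|.
have Rf1 := ler_norm Re_f.
set C := - x0 * (`|Re_D| + 1) + `|Re_f| + dl * (`|Im_D| + 1).
have C0 : 0 <= C.
  have : 0 <= - x0 * (`|Re_D| + 1) by rewrite mulr_ge0 ?addr_ge0 // oppr_ge0 ltW.
  have : 0 <= dl * (`|Im_D| + 1) by rewrite mulr_ge0 ?addr_ge0 // ltW.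
  by have := normr_ge0 Re_f; rewrite /C; lra.
apply: (@ge0_of_small _ _ C dl dl0 C0).
move=> e e0 edl; have [ru [iu [ruD iuD _ pos]]] := near_dl e e0 edl.
move: ruD iuD; rewrite !ler_distl => /andP[ru1 _] /andP[iu1 _].
have t1 : x0 * ru <= - x0 * (`|Re_D| + 1).
  by rewrite mulNr -mulrN; apply: ler_wnM2l; [exact: ltW | lra].
have t2 : - (e * iu) <= dl * (`|Im_D| + 1).
  rewrite -mulrN; apply: (@le_trans _ _ (e * (`|Im_D| + 1))).
    by apply: ler_wpM2l; [exact: ltW | lra].
  by apply: ler_wpM2r; [rewrite addr_ge0 | exact: ltW].
have : e * (x0 * ru + Re_f - e * iu) <= e * C by apply: ler_wpM2l; [exact: ltW | rewrite /C; lra].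
nra.
Qed.

Lemma Im_f_eq0 : Im_f = 0.
Proof.
apply/le_anti; rewrite Im_f_ge0 andbT.
by rewrite -(nmulr_rge0 _ x0_lt0) x0_Im_f_ge0.
Qed.

Lemma Re_D_ge0 : 0 <= Re_D.
Proof.
apply: (@ge0_of_small _ _ 1 1 ltr01 ler01) => e e0 _.
have [dl dl0 near_dl] := quot _ e0.
have dl20 : 0 < dl / 2 by lra.
have [ru [iu [ruD _ pos _]]] := near_dl (dl / 2) dl20 ltac:(lra).
rewrite Im_f_eq0 add0r pmulr_rgt0 // in pos.
by move: ruD; rewrite ler_distl => /andP[_]; lra.
Qed.

Lemma Re_f_ge0 : 0 <= Re_f.
Proof.
have /ler_normlP[ImD1 _] := lexx `|Im_D|.
have Rf_ge et : 0 < et -> x0 * et <= Re_f.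
  move=> et0; have [dl dl0 near_dl] := quot _ et0; rewrite -subr_ge0.
  have C0 : 0 <= `|Im_D| + et by have := normr_ge0 Im_D; lra.
  apply: (@ge0_of_small _ _ (`|Im_D| + et) dl dl0 C0).
  move=> e e0 edl; have [ru [iu [ruD iuD _ pos]]] := near_dl e e0 edl.
  rewrite Im_f_eq0 (_ : x0 * _ + _ = e * (x0 * ru + Re_f - e * iu)) in pos; last by ring.
  rewrite pmulr_rgt0 // in pos.
  move: ruD iuD; rewrite !ler_distl => /andP[ru1 _] /andP[iu1 _].
  have t1 : x0 * ru <= x0 * (Re_D - et) by apply: ler_wnM2l; [exact: ltW | lra].
  have t0 : x0 * Re_D <= 0 by rewrite nmulr_rle0 // Re_D_ge0.
  have t2 : - (e * iu) <= e * (`|Im_D| + et).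
    by rewrite -mulrN; apply: ler_wpM2l; [exact: ltW | lra].
  lra.
apply: (@ge0_of_small _ _ 1 1 ltr01 ler01) => e e0 _.
have et0 : 0 < e / (2 * - x0) by rewrite divr_gt0 // mulr_gt0 // oppr_gt0.
have := Rf_ge _ et0; rewrite (_ : x0 * (e / (2 * - x0)) = - e / 2); first lra.
by field; rewrite ?mulf_neq0 ?oppr_eq0 ?(ltr0_neq0 x0_lt0).
Qed.

End NegativeAxis.

Section ClassS.
Variable R : realType.
Local Open Scope complex_scope.

Lemma derivable_quotient_near (f : R[i] -> R[i]) (z : R[i]) :
  derivable (f : (R[i])^o -> (R[i])^o) z 1 ->
  exists D : R[i], forall e : R, 0 < e -> exists2 d : R, 0 < d &
    forall h : R[i], h != 0 -> `|h| < d%:C -> `|D - h^-1 * (f (h + z) - f z)| <= e%:C.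
Proof.
move=> /cvg_ex [D HD]; exists D => e e0.
move/cvgrPdist_le: HD => /(_ e%:C); rewrite ltcR => /(_ e0).
rewrite /dnbhs /within /= => /nbhs_normP [d /= d0 Hd].
have dR : d = (complex.Re d)%:C.
  by case: d d0 {Hd} => a b; rewrite ltcE /= => /andP[/eqP -> _].
exists (complex.Re d); first by move: d0; rewrite ltcE /= => /andP[].
move=> h h0 hd; rewrite -dR in hd.
have := Hd h; rewrite /ball_ /= sub0r normrN => /(_ hd h0).
by rewrite (_ : h%:A = h) // /GRing.scale /= mulr1.
Qed.

Lemma normc_Re_le (x : R[i]) : `|complex.Re x| <= complex.Re `|x|.
Proof. by have := normc_ge_Re x; rewrite lecE => /andP[_]. Qed.

Lemma normc_Im_le (x : R[i]) : `|complex.Im x| <= complex.Re `|x|.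
Proof.
have := normc_Re_le (x * 'i); rewrite ReiNIm normrN normrM.
have -> : `|'i : R[i]| = 1 by rewrite normc_def /= expr0n expr1n add0r sqrtr1.
by rewrite mulr1.
Qed.

Lemma normc_iR (e : R) : 0 < e -> `|'i * e%:C| = e%:C.
Proof.
move=> e0; rewrite normc_def /=; simpc.
by rewrite expr0n add0r sqrtr_sqr ger0_norm // ltW.
Qed.

Lemma in_S_negative_real (f : R[i] -> R[i]) (x0 : R) : x0 < 0 -> in_S f ->
  complex.Im (f x0%:C) = 0 /\ 0 <= complex.Re (f x0%:C).
Proof.
move=> x00 [hder hpos _].
have nz : ~ (complex.Im x0%:C = 0 /\ 0 <= complex.Re x0%:C) by case=> _ /=; rewrite leNgt x00.
have [D HD] := derivable_quotient_near _ _ (hder _ nz).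
suff quot : forall et, 0 < et -> exists2 dl, 0 < dl & forall e, 0 < e -> e < dl ->
    exists ru iu, [/\ `|ru - complex.Re D| <= et, `|iu - complex.Im D| <= et,
      0 < complex.Im (f x0%:C) + e * ru &
      0 < x0 * (complex.Im (f x0%:C) + e * ru) + e * (complex.Re (f x0%:C) - e * iu)].
  by split; [exact: Im_f_eq0 x00 quot | exact: Re_f_ge0 x00 quot].
move=> et et0; have [dl dl0 Hd] := HD et et0.
exists dl => // e e0 edl.
set h : R[i] := 'i * e%:C.
have hn : `|h| = e%:C by apply: normc_iR.
have h0 : h != 0.
  apply/negP => /eqP h0; move: hn; rewrite h0 normr0 => /complexI/eqP.
  by rewrite eq_sym (gt_eqF e0).
have := Hd h h0 ltac:(by rewrite hn ltcR).
set u := h^-1 * (f (h + x0%:C) - f x0%:C) => near_u.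
exists (complex.Re u), (complex.Im u).
have w : complex.Re `|D - u| <= et by move: near_u; rewrite lecE => /andP[_].
have fE : f (h + x0%:C) = f x0%:C + h * u.
  by rewrite /u mulrA divff // mul1r [f x0%:C + _]addrC subrK.
have him : 0 < complex.Im (h + x0%:C) by rewrite /h /=; simpc.
have [p1 p2] := hpos _ him; rewrite fE in p1 p2.
split.
- rewrite -normrN (_ : - _ = complex.Re (D - u)); last by case: (D) (u) => ? ? [? ?] /=; rewrite opprB.
  exact: le_trans (normc_Re_le _) w.
- rewrite -normrN (_ : - _ = complex.Im (D - u)); last by case: (D) (u) => ? ? [? ?] /=; rewrite opprB.
  exact: le_trans (normc_Im_le _) w.
- by move: p1; rewrite /h; case: (f x0%:C) => a b; case: (u) => c d /=; simpc.
- by move: p2; rewrite /h; case: (f x0%:C) => a b; case: (u) => c d /=; simpc.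
Qed.

End ClassS.

Local Open Scope classical_set_scope.

Section RealLimits.
Variable R : realType.

Lemma ratio_le_of_dist (u v g : R) : 0 <= u -> 0 <= g ->
  `|u - v| <= u * (g / (1 + g)) -> u <= (1 + g) * v /\ v <= (1 + g) * u.
Proof.
move=> u0 g0; rewrite distrC ler_distl => /andP[lo hi].
have g1 : 0 < 1 + g by lra.
have e : (1 + g) * (u - u * (g / (1 + g))) = u by field; rewrite gt_eqF.
split; first by rewrite -{1}e; apply: ler_wpM2l; lra.
have : u * (g / (1 + g)) <= u * g.
  by apply: ler_wpM2l => //; rewrite ler_pdivrMr // ler_peMr //; lra.
lra.
Qed.

Lemma near_shift_gt0 (tau : R) : 0 < tau -> \forall h \near (0 : R)^', 0 < tau + h.
Proof.
move=> tau0; apply: nbhs_dnbhs; apply/nbhs_normP; exists tau => //= h.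
by rewrite /ball_ /= sub0r normrN ltr_norml => /andP[]; lra.
Qed.

Lemma dist_le_scaled_between (h A B Q D : R) : h != 0 -> h * B <= h * Q <= h * A ->
  `|Q - D| <= `|A - D| + `|B - D|.
Proof.
move=> h0 /andP[hB hA].
have /ler_normlP[a1 a2] := lexx `|A - D|.
have /ler_normlP[b1 b2] := lexx `|B - D|.
have [hn|hp] := ltP h 0; last have hp' : 0 < h by rewrite lt0r h0.
- rewrite !(ler_nM2l hn) in hA hB.
  by rewrite ler_norml; apply/andP; split; lra.
- rewrite !(ler_pM2l hp') in hA hB.
  by rewrite ler_norml; apply/andP; split; lra.
Qed.

Lemma cvg_dist_squeeze {T} (F : set_system T) {FF : Filter F} (A B Q : T -> R) (D : R) :
  (\forall t \near F, `|Q t - D| <= `|A t - D| + `|B t - D|) ->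
  A t @[t --> F] --> D -> B t @[t --> F] --> D -> Q t @[t --> F] --> D.
Proof.
move=> near_le /cvgrPdist_le cA /cvgrPdist_le cB; apply/cvgrPdist_le => e e0.
have e2 : 0 < e / 2 by rewrite divr_gt0.
apply: filterS3 near_le (cA _ e2) (cB _ e2) => t h1 h2 h3.
by rewrite distrC (le_trans h1) // [e]splitr lerD // distrC.
Qed.

Lemma cvg_sum_ord {T} (F : set_system T) {FF : Filter F} (m : nat)
    (f : 'I_m -> T -> R) (l : 'I_m -> R) :
  (forall i, f i t @[t --> F] --> l i) ->
  \sum_(i < m) f i t @[t --> F] --> \sum_(i < m) l i.
Proof.
by move=> fl; apply: (@cvg_big R 'I_m +%R 0 xpredT add_continuous T F (index_enum _) f l FF).
Qed.

Lemma slope_cvg (n k : nat) {T} (F : set_system T) {FF : Filter F}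
    (q w : T -> 'I_n -> 'I_k -> R) (y : T -> 'I_n -> R)
    (q0 w0 : 'I_n -> 'I_k -> R) (y0 : 'I_n -> R) :
  (forall i j, q t i j @[t --> F] --> q0 i j) ->
  (forall i j, w t i j @[t --> F] --> w0 i j) ->
  (forall i, y t i @[t --> F] --> y0 i) ->
  (forall j, 1 + etr w0 y0 j != 0) ->
  slope (q t) (y t) (w t) @[t --> F] --> slope q0 y0 w0.
Proof.
move=> qq ww yy E0; apply: cvg_sum_ord => j; apply: cvgM.
  by apply: cvgMl_tmp; apply: cvg_sum_ord => i; exact: cvgM.
apply: cvgV => //; apply: cvgD; first exact: cvg_cst.
by apply: cvgMl_tmp; apply: cvg_sum_ord => i; exact: cvgM.
Qed.

End RealLimits.

Section FixpointFamily.
Context {R : realType} {n k : nat} {c : R} {d : R -> 'I_n -> 'I_k -> R}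
  {x : R -> 'I_n -> R} {tau : R}.
Hypotheses (c0 : 0 < c) (tau0 : 0 < tau)
  (dfix : forall s, 0 < s -> is_fixpoint c (d s) (x s))
  (d_gt0 : forall s, 0 < s -> forall i j, 0 < d s i j).

Lemma fixpoint_cvg :
  (forall i j, d (tau + h) i j @[h --> 0^'] --> d tau i j) ->
  forall i, x (tau + h) i @[h --> 0^'] --> x tau i.
Proof.
move=> dcvg i; apply/cvgrPdist_le => eps eps0.
have xt0 : 0 < x tau i := (dfix _ tau0 i).1.
have dt0 i' j : 0 <= d tau i' j := ltW (d_gt0 _ tau0 i' j).
have row0 i' : 0 <= k%:R^-1 * \sum_j d tau i' j by rewrite mulr_ge0 ?invr_ge0 ?sumr_ge0.
set S := \sum_i' k%:R^-1 * \sum_j d tau i' j.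
have rowS i' : k%:R^-1 * \sum_j d tau i' j <= S by rewrite /S (bigD1 i') //= lerDl sumr_ge0.
have S0 : 0 <= S := le_trans (row0 i) (rowS i).
set eta := eps / x tau i.
have eta0 : 0 < eta by rewrite divr_gt0.
have S1 : 0 < 6 * (S + 1) by lra.
set g := Num.min 1 (eta * c / (6 * (S + 1))).
have g0 : 0 < g by rewrite /g lt_min ltr01 /= divr_gt0 // mulr_gt0.
have g1 : g <= 1 by rewrite /g ge_min lexx.
have gS : 6 * g * S / c <= eta.
  have gb : g <= eta * c / (6 * (S + 1)) by rewrite /g ge_min lexx orbT.
  rewrite ler_pdivlMr // in gb; rewrite ler_pdivrMr //; nra.
have near_d : \forall h \near 0^', forall i' j,
    `|d tau i' j - d (tau + h) i' j| <= d tau i' j * (g / (1 + g)).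
  apply: filter_forall => i'; apply: filter_forall => j.
  by move/cvgrPdist_le : (dcvg i' j); apply; rewrite mulr_gt0 ?divr_gt0 ?d_gt0 //; lra.
apply: filterS2 near_d (@near_shift_gt0 _ _ tau0) => h dh hpos.
have [dl du] : (forall i' j, d tau i' j <= (1 + g) * d (tau + h) i' j) /\
               (forall i' j, d (tau + h) i' j <= (1 + g) * d tau i' j).
  by split=> i' j; have [] := @ratio_le_of_dist _ _ _ _ (dt0 i' j) (ltW g0) (dh i' j).
have g01 : 0 <= g <= 1 by rewrite g1 ltW.
have [up lo] := @fixpoint_close R n k c (d tau) (d (tau + h)) (x tau) (x (tau + h)) g S
  c0 g01 dt0 dl du rowS (dfix _ tau0) (dfix _ hpos) i.
have r0 : 0 <= 6 * g * S / c by rewrite divr_ge0 ?mulr_ge0 // ltW.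
have rx : 6 * g * S / c * x tau i <= eta * x tau i by rewrite ler_wpM2r // ltW.
have epsE : eps = eta * x tau i by rewrite /eta divfK // gt_eqF.
rewrite epsE ler_distl; apply/andP; split; first lra.
have [hx|hx] := leP (x (tau + h) i) (x tau i); last lra.
have : 6 * g * S / c * x (tau + h) i <= 6 * g * S / c * x tau i by rewrite ler_wpM2l.
lra.
Qed.

Lemma potential_quotient_cvg (d' : 'I_n -> 'I_k -> R) :
  (forall i j, (d (tau + h) i j - d tau i j) / h @[h --> 0^'] --> d' i j) ->
  (potential c (d (tau + h)) (x (tau + h)) - potential c (d tau) (x tau)) / h
    @[h --> 0^'] --> slope d' (x tau) (d tau).
Proof.
move=> dquot.
have dcvg i j : d (tau + h) i j @[h --> 0^'] --> d tau i j.
  have : d tau i j + h * ((d (tau + h) i j - d tau i j) / h) @[h --> 0^'] -->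
         d tau i j + 0 * d' i j.
    by apply: cvgD; [exact: cvg_cst | apply: cvgM; [exact: cvg_within | exact: dquot]].
  rewrite mul0r addr0; apply: cvg_trans; apply: near_eq_cvg.
  by apply: filterS (nbhs_dnbhs_neq 0) => h h0; rewrite mulrC divfK // addrC subrK.
have Enz j : 1 + etr (d tau) (x tau) j != 0.
  rewrite gt_eqF // ltr_pwDl // etr_ge0 // => [i' j'|i'].
    exact: ltW (d_gt0 _ tau0 i' j').
  exact: ltW (dfix _ tau0 i').1.
apply: (@cvg_dist_squeeze R _ _ _
  (fun h => slope (fun i j => (d (tau + h) i j - d tau i j) / h) (x tau) (d tau))
  (fun h => slope (fun i j => (d (tau + h) i j - d tau i j) / h) (x (tau + h)) (d (tau + h)))).
- apply: filterS2 (nbhs_dnbhs_neq 0) (@near_shift_gt0 _ _ tau0) => h h0 hpos.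
  apply: (@dist_le_scaled_between _ h _ _ _ _ h0).
  rewrite !slope_scale // (mulrC h) divfK //.
  by apply: potential_increment_bounds (dfix _ tau0) (dfix _ hpos) => // i j;
    apply: ltW; exact: d_gt0.
- by apply: slope_cvg => // [i j|i]; exact: cvg_cst.
- exact: slope_cvg (fixpoint_cvg dcvg) Enz.
Qed.

End FixpointFamily.

Section DerivativeQuotient.
Variable R : realType.

Lemma derive1_quotient_cvg (f : R -> R) (x : R) : derivable f x 1 ->
  (f (x + h) - f x) / h @[h --> 0^'] --> f^`() x.
Proof.
move=> df; rewrite derive1E.
rewrite (_ : (fun h => _) = (fun h => h^-1 *: ((f \o shift x) (h *: 1) - f x))) //.
by apply/funext => h /=; rewrite /GRing.scale /= mulr1 [x + h]addrC mulrC.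
Qed.

Lemma quotient_cvg_is_derive (f : R -> R) (x l : R) :
  (f (x + h) - f x) / h @[h --> 0^'] --> l -> is_derive x 1 f l.
Proof.
move=> fl.
have E : (fun h => h^-1 *: ((f \o shift x) (h *: 1) - f x)) = (fun h => (f (x + h) - f x) / h).
  by apply/funext => h /=; rewrite /GRing.scale /= mulr1 [h + x]addrC mulrC.
have df : derivable f x 1 by apply/cvg_ex; exists l; rewrite /= E.
by apply: DeriveDef df _; rewrite /derive /= E; exact: cvg_lim.
Qed.

Lemma is_derive_ext (f g : R -> R) (x df : R) :
  f =1 g -> is_derive x 1 f df -> is_derive x 1 g df.
Proof. by move=> /funext ->. Qed.

Lemma is_derive_affine (al be x : R) : is_derive x 1 (fun s : R => al * s + be) al.
Proof.
have -> : (fun s : R => al * s + be) = (al \*: id) + cst be.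
  by apply/funext => s /=; rewrite /GRing.scale.
apply: is_derive_eq (is_deriveD (is_deriveZ al (is_derive_id x 1)) (is_derive_cst be x 1)) _.
by rewrite addr0 /GRing.scale /= mulr1.
Qed.

End DerivativeQuotient.

Arguments is_derive_ext {R f g x df}.

Section VbarDerivative.
Context {R : realType} {B M K L : nat} {P C : R} {a : 'I_B -> 'I_K -> R}.
Hypotheses (L_gt0 : (0 < L)%N) (M_gt0 : (0 < M)%N) (P_gt0 : 0 < P) (C_gt0 : 0 < C)
  (a_gt0 : forall b k, 0 < a b k).
Local Notation p := (P / L%:R).
Local Notation v := (vv R B M K a).
Local Notation sg := (sigma2 R B M K L P C a).
Local Notation vh := (vhat R B M K L P C a).
Local Notation vt := (vtil R B M K L P C a).
Local Notation vb := (vbar R B M K L P C a).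

Lemma p_gt0 : 0 < p. Proof. by rewrite divr_gt0 ?ltr0n. Qed.

Lemma sigma2_gt0 i : 0 < sg i.
Proof.
have e0 : 0 < C / (M * L)%:R by rewrite divr_gt0 // ltr0n muln_gt0 M_gt0 L_gt0.
rewrite /sigma2 divr_gt0 //.
  rewrite ltr_pwDl // mulr_ge0 ?(ltW p_gt0) // sumr_ge0 // => j _.
  exact: ltW (a_gt0 _ _).
rewrite subr_gt0 lt_neqAle; apply/andP; split.
  by rewrite eq_sym powR_eq1; apply/negP => /or3P[/eqP h|h|/eqP h]; lra.
by have := @ler_powR R 2 (ler1n R 2) 0 (C / (M * L)%:R) (ltW e0); rewrite powRr0.
Qed.

Definition vdenom (s : R) i j := s * p * v i j + 1 + sg i.

Definition vhat' (s : R) i j :=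
  s * p * v i j ^+ 2 * (- vdenom s i j ^- 2 * (p * v i j)) + (vdenom s i j)^-1 * (p * v i j ^+ 2).

Definition vtil' (s : R) i l := v i l * (1 + sg i) * (- vdenom s i l ^- 2 * (p * v i l)).

Definition vbar_denom (s : R) i := 1 + sg i + p * \sum_(l < K) vt s i l.

Definition vbar_denom' (s : R) i := p * \sum_(l < K) vtil' s i l.

Definition vbar' (s : R) i j :=
  vh s i j * (- vbar_denom s i ^- 2 * vbar_denom' s i) + (vbar_denom s i)^-1 * vhat' s i j.

Lemma vdenom_gt0 (s : R) i j : 0 <= s -> 0 < vdenom s i j.
Proof.
move=> s0; rewrite /vdenom -addrA ltr_wpDl ?ltr_pwDr ?sigma2_gt0 //.
by rewrite !mulr_ge0 // ltW ?p_gt0 ?a_gt0.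
Qed.

Lemma is_derive_vdenom_inv (s : R) i j : 0 <= s ->
  is_derive s 1 (fun s => (vdenom s i j)^-1) (- vdenom s i j ^- 2 * (p * v i j)).
Proof.
move=> s0; have nz := gt_eqF (vdenom_gt0 _ i j s0).
apply: (@is_deriveV R (fun s => vdenom s i j) s _ 1 (negbT nz)).
by apply: is_derive_ext (is_derive_affine _ (p * v i j) (1 + sg i) s) => y; rewrite /vdenom; ring.
Qed.

Lemma vtil_ge0 (s : R) i l : 0 <= s -> 0 <= vt s i l.
Proof.
move=> s0; apply: divr_ge0; last exact: ltW (vdenom_gt0 _ i l s0).
by rewrite mulr_ge0 ?addr_ge0 // ltW ?a_gt0 ?sigma2_gt0.
Qed.

Lemma vbar_denom_gt0 (s : R) i : 0 <= s -> 0 < vbar_denom s i.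
Proof.
move=> s0; rewrite /vbar_denom ltr_wpDr ?ltr_pwDr ?sigma2_gt0 //.
by rewrite mulr_ge0 ?(ltW p_gt0) // sumr_ge0 // => l _; exact: vtil_ge0.
Qed.

Lemma is_derive_vbar (s : R) i j : 0 <= s -> is_derive s 1 (fun s => vb s i j) (vbar' s i j).
Proof.
move=> s0.
have dvt l : is_derive s 1 (fun s => vt s i l) (vtil' s i l).
  exact: is_derive_ext (fun=> erefl) (is_deriveZ (v i l * (1 + sg i)) (is_derive_vdenom_inv _ i l s0)).
have dden : is_derive s 1 (fun s => vbar_denom s i) (vbar_denom' s i).
  apply: is_derive_eq (is_derive_ext _ (is_deriveD (is_derive_cst (1 + sg i) s 1)
    (is_deriveZ p (@is_derive_sum R _ _ K (fun l s => vt s i l) s 1 _ dvt)))) _.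
  - by move=> y; rewrite /vbar_denom /GRing.scale /= fct_sumE.
  - by rewrite add0r.
have dvh : is_derive s 1 (fun s => vh s i j) (vhat' s i j).
  have dnum : is_derive s 1 (fun y => y * p * v i j ^+ 2) (p * v i j ^+ 2).
    by apply: is_derive_ext (is_derive_affine _ (p * v i j ^+ 2) 0 s) => y; ring.
  exact: is_deriveM dnum (is_derive_vdenom_inv _ i j s0).
exact: is_deriveM dvh
  (@is_deriveV R (fun s => vbar_denom s i) s _ 1 (negbT (gt_eqF (vbar_denom_gt0 _ i s0))) dden).
Qed.

Lemma vbar'_gt0 (s : R) i j : 0 <= s -> 0 < vbar' s i j.
Proof.
move=> s0; have e0 := vdenom_gt0 _ i j s0; have D0 := vbar_denom_gt0 _ i s0.
have vh0 : 0 <= vh s i j.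
  apply: divr_ge0; last exact: ltW e0.
  by rewrite !mulr_ge0 ?exprn_ge0 // ltW ?p_gt0 ?a_gt0.
have vh'E : vhat' s i j = p * v i j ^+ 2 * (1 + sg i) / vdenom s i j ^+ 2.
  rewrite /vhat' (_ : 1 + sg i = vdenom s i j - s * p * v i j); last first.
    by rewrite /vdenom; ring.
  by field; rewrite (gt_eqF e0) pnatr_eq0 -lt0n L_gt0.
have sg1 : 0 < 1 + sg i := addr_gt0 ltr01 (sigma2_gt0 i).
have v0 l : 0 < v i l := a_gt0 _ _.
have vh'0 : 0 < vhat' s i j.
  rewrite vh'E; apply: divr_gt0; last exact: exprn_gt0 e0.
  by apply: mulr_gt0 sg1; apply: mulr_gt0 p_gt0 _; exact: exprn_gt0.
have den'0 : vbar_denom' s i <= 0.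
  rewrite /vbar_denom' pmulr_rle0 ?p_gt0 // -oppr_ge0 -sumrN sumr_ge0 // => l _.
  rewrite /vtil' mulNr mulrN opprK; apply: mulr_ge0; first exact: ltW (mulr_gt0 (v0 l) sg1).
  apply: mulr_ge0; last exact: ltW (mulr_gt0 p_gt0 (v0 l)).
  by rewrite invr_ge0; exact: exprn_ge0 (ltW (vdenom_gt0 _ i l s0)).
have Di : 0 < (vbar_denom s i)^-1 by rewrite invr_gt0.
rewrite /vbar'; apply: ltr_wpDl; last exact: mulr_gt0 Di vh'0.
apply: (mulr_ge0 vh0).
apply: mulr_le0; last exact: den'0.
by rewrite oppr_le0 invr_ge0; exact: exprn_ge0 (ltW D0).
Qed.

Lemma vbar_gt0 (s : R) i j : 0 < s -> 0 < vb s i j.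
Proof.
move=> s0; apply: divr_gt0; last exact: vbar_denom_gt0 _ i (ltW s0).
apply: divr_gt0; last exact: vdenom_gt0 _ i j (ltW s0).
by apply: mulr_gt0; [exact: mulr_gt0 s0 p_gt0 | exact: exprn_gt0 (a_gt0 _ _)].
Qed.

End VbarDerivative.

Lemma invmx_diag (F : fieldType) (n : nat) (r : 'rV[F]_n) :
  (forall i, r 0 i != 0) -> invmx (diag_mx r) = diag_mx (\row_i (r 0 i)^-1).
Proof.
move=> r0.
have rV : diag_mx r *m diag_mx (\row_i (r 0 i)^-1) = 1%:M.
  rewrite mulmx_diag; apply/matrixP => i j; rewrite !mxE.
  by case: (i == j); rewrite ?mulr1n ?mulr0n // divff.
have ru : diag_mx r \in unitmx.
  by rewrite unitmxE det_diag unitfE; apply/prodf_neq0 => i _.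
by rewrite -[RHS](mulKmx ru) rV mulmx1.
Qed.

Lemma ln_prod (R : realType) (n : nat) (f : 'I_n -> R) :
  (forall i, 0 < f i) -> ln (\prod_(i < n) f i) = \sum_(i < n) ln (f i).
Proof.
elim: n f => [|n IH] f f0; first by rewrite !big_ord0 ln1.
by rewrite !big_ord_recr /= lnM ?posrE ?IH // prodr_gt0.
Qed.

Section Model.
Local Open Scope complex_scope.
Context {R : realType} {B M K L : nat} {P C : R} {a : 'I_B -> 'I_K -> R}
  {t : R -> 'I_(B * M) -> R[i] -> R[i]}.
Local Notation N := (B * M)%N.
Local Notation cP := (L%:R / (K%:R * P) : R).
Local Notation zP := ((- (L%:R / (K%:R * P)))%:C : R[i]).
Local Notation vb := (vbar R B M K L P C a).
Local Notation xP s := (fun i => complex.Re (t s i zP)).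

Lemma DmCE s j : DmC R B M K L P C a s j = diag_mx (\row_i (vb s i j)%:C).
Proof.
by apply/matrixP => i i'; rewrite !mxE; case: (i == i'); rewrite ?mulr1n ?mulr0n.
Qed.

Lemma tr_DmC_diag s (x : 'I_N -> R) j :
  1 + K%:R^-1 * \tr (DmC R B M K L P C a s j *m diag_mx (\row_i (x i)%:C))
  = (1 + etr (vb s) x j)%:C.
Proof.
rewrite DmCE mulmx_diag mxtrace_diag rmorphD rmorph1 rmorphM fmorphV rmorph_nat rmorph_sum.
by congr (_ + _ * _); apply: eq_bigr => i _; rewrite [RHS]rmorphM !mxE.
Qed.

Lemma T_equation_diag s (x : 'I_N -> R) (c : R) :
  K%:R^-1 *: \sum_(j < K) (1 + K%:R^-1 *
      \tr (DmC R B M K L P C a s j *m diag_mx (\row_i (x i)%:C)))^-1 *: DmC R B M K L P C a s j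
    - (- c)%:C%:M
  = diag_mx (\row_i (eff (vb s) x i + c)%:C).
Proof.
under eq_bigr => j _ do rewrite tr_DmC_diag DmCE.
apply/matrixP => i i'; rewrite !mxE summxE.
under eq_bigr => j _ do rewrite !mxE mulrnAr.
rewrite sumrMnl mulrnAr -mulrnBl; congr (_ *+ _).
rewrite rmorphD rmorphM fmorphV rmorph_nat rmorph_sum rmorphN opprK.
by congr (_ * _ + _); apply: eq_bigr => j _; rewrite [RHS]rmorphM fmorphV.
Qed.

Lemma T_solution_fixpoint s : (0 < K)%N -> (0 < L)%N -> 0 < P ->
  is_T_solution R B M K L P C a t s -> (forall i j, 0 <= vb s i j) ->
  is_fixpoint cP (vb s) (xP s).
Proof.
move=> K0 L0 P0 [tS tE] d0.
have c0 : 0 < cP by rewrite divr_gt0 ?mulr_gt0 ?ltr0n.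
have xE i : t s i zP = (xP s i)%:C /\ 0 <= xP s i.
  have xn : - cP < 0 by rewrite oppr_lt0.
  have [Im0 Re0] := @in_S_negative_real R _ _ xn (tS i).
  by split => //; move: Im0; case: (t s i zP) => ? ? /= ->.
have nz : ~ (complex.Im zP = 0 /\ 0 <= complex.Re zP).
  by case=> _ /=; rewrite oppr_ge0 leNgt c0.
have := tE zP nz.
rewrite (_ : Tmat R B M t s zP = diag_mx (\row_i (xP s i)%:C)); last first.
  by apply/matrixP => i j; rewrite !mxE (xE i).1.
have effc i : 0 < eff (vb s) (xP s) i + cP.
  apply: ltr_wpDl c0; apply: eff_ge0 => // j.
  by apply: etr_ge0 => // i'; exact: (xE i').2.
rewrite T_equation_diag invmx_diag => [/matrixP Tfix i|i]; last first.
  by rewrite mxE; apply/negP => /eqP/complexI/eqP; rewrite gt_eqF.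
have := Tfix i i; rewrite !mxE eqxx /= !mulr1n -fmorphV => /complexI ->.
by split; rewrite ?invr_gt0.
Qed.

Lemma tr_diag_TP s (q : 'I_N -> 'I_K -> R) j :
  K%:R^-1 * \tr (diag_mx (\row_i q i j) *m TP R B M K L P t s) = etr q (xP s) j.
Proof.
by rewrite /TP mulmx_diag mxtrace_diag; congr (_ * _); apply: eq_bigr => i _; rewrite !mxE.
Qed.

Lemma Rbar_potential s : 0 < cP -> is_fixpoint cP (vb s) (xP s) ->
  Rbar R B M K L P C a t s = (N%:R)^-1 * potential cP (vb s) (xP s).
Proof.
move=> c0 fx.
have detE : \det (cP *: TP R B M K L P t s) = \prod_i (cP * xP s i).
  rewrite (_ : _ *: _ = diag_mx (\row_i (cP * xP s i))) ?det_diag; last first.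
    by apply/matrixP => i j; rewrite !mxE; case: (i == j); rewrite ?mulr1n ?mulr0n ?mulr0.
  by apply: eq_bigr => i _; rewrite mxE.
have sumE (F : R -> R) : \sum_j F (K%:R^-1 * \tr (Dm R B M K L P C a s j *m TP R B M K L P t s))
    = \sum_j F (etr (vb s) (xP s) j).
  by apply: eq_bigr => j _; rewrite tr_diag_TP.
rewrite /Rbar (sumE (fun y => ln (1 + y))) (sumE (fun y => y / (1 + y))).
rewrite detE ln_prod => [|i]; last by rewrite mulr_gt0 // (fx i).1.
rewrite (@fixpoint_sum_frac _ _ _ cP (vb s) (xP s) fx) /potential; ring.
Qed.

End Model.

Section RbarDerivative.
Local Open Scope complex_scope.
Context {R : realType} {B M K L : nat} {P C : R} {a : 'I_B -> 'I_K -> R}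
  {t : R -> 'I_(B * M) -> R[i] -> R[i]} {tau : R}.
Hypotheses (M_gt0 : (0 < M)%N) (K_gt0 : (0 < K)%N) (L_gt0 : (0 < L)%N)
  (P_gt0 : 0 < P) (C_gt0 : 0 < C) (a_gt0 : forall b k, 0 < a b k)
  (T_sol : forall s, 0 < s -> is_T_solution R B M K L P C a t s) (tau_gt0 : 0 < tau).
Local Notation N := (B * M)%N.
Local Notation cP := (L%:R / (K%:R * P) : R).
Local Notation vb := (vbar R B M K L P C a).
Local Notation xP s := (fun i => complex.Re (t s i ((- (L%:R / (K%:R * P)))%:C))).

Let cP_gt0 : 0 < cP. Proof. by rewrite divr_gt0 ?mulr_gt0 ?ltr0n. Qed.

Lemma vbar_fixpoint s : 0 < s -> is_fixpoint cP (vb s) (xP s).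
Proof.
move=> s0; apply: T_solution_fixpoint => //; first exact: T_sol.
by move=> i j; apply/ltW/vbar_gt0.
Qed.

Lemma Rbar_is_derive :
  is_derive tau 1 (Rbar R B M K L P C a t)
    ((N%:R)^-1 * slope (fun i j => derive1 (fun s => vb s i j) tau) (xP tau) (vb tau)).
Proof.
apply: quotient_cvg_is_derive.
have vb_gt0 s : 0 < s -> forall i j, 0 < vb s i j by move=> s0 i j; exact: vbar_gt0.
have dquot i j : (vb (tau + h) i j - vb tau i j) / h @[h --> 0^'] -->
                 derive1 (fun s => vb s i j) tau.
  apply: (@derive1_quotient_cvg R (fun s => vb s i j)); apply: ex_derive.
  by apply: is_derive_vbar => //; exact: ltW.
have quot_cvg := @cvgMl_tmp _ _ _ (dnbhs_filter (0 : R)) _ (N%:R^-1) _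
  (potential_quotient_cvg cP_gt0 tau_gt0 vbar_fixpoint vb_gt0 _ dquot).
apply: (squeeze_cvgr _ quot_cvg quot_cvg).
apply: filterS (@near_shift_gt0 _ _ tau_gt0) => h hpos.
rewrite (Rbar_potential _ cP_gt0 (vbar_fixpoint _ hpos)).
by rewrite (Rbar_potential _ cP_gt0 (vbar_fixpoint _ tau_gt0)) -mulrBr -mulrA lexx.
Qed.

Lemma Rbar_slope_gt0 : (0 < B)%N ->
  0 < (N%:R)^-1 * slope (fun i j => derive1 (fun s => vb s i j) tau) (xP tau) (vb tau).
Proof.
move=> B_gt0; have N_gt0 : (0 < N)%N by rewrite muln_gt0 B_gt0.
apply: mulr_gt0; first by rewrite invr_gt0 ltr0n.
have x_gt0 i : 0 < xP tau i := (vbar_fixpoint _ tau_gt0 i).1.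
apply: slope_gt0 => // [i j|j].
  rewrite derive1E (@derive_val _ _ _ _ _ _ _
    (is_derive_vbar L_gt0 M_gt0 P_gt0 C_gt0 a_gt0 tau i j (ltW tau_gt0))).
  exact: (vbar'_gt0 L_gt0 M_gt0 P_gt0 C_gt0 a_gt0 _ _ _ (ltW tau_gt0)).
apply: etr_ge0 => [i j'|i]; last exact: ltW.
exact: ltW (vbar_gt0 L_gt0 M_gt0 P_gt0 C_gt0 a_gt0 _ _ _ tau_gt0).
Qed.

End RbarDerivative.

Local Open Scope ring_scope.
Local Open Scope complex_scope.

Theorem theorem2 (R : realType) (B M K L : nat) (P C : R)
  (a : 'I_B -> 'I_K -> R) (t : R -> 'I_(B * M) -> R[i] -> R[i])
  (tau vmax : R) :
  (0 < B)%N -> (0 < M)%N -> (0 < K)%N -> (0 < L)%N ->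
  0 < P -> 0 < C -> (forall b k, 0 < a b k) ->
  (forall tau', 0 < tau' -> is_T_solution R B M K L P C a t tau') ->
  0 < tau ->
  (forall i j, 0 <= vbar R B M K L P C a tau i j < vmax) ->
  let Rb := Rbar R B M K L P C a t in
  [/\ derivable Rb tau 1,
      derive1 Rb tau =
        ((B * M)%N%:R)^-1 * \sum_(j < K)
          ((K%:R)^-1 * \tr (Dm' R B M K L P C a tau j *m TP R B M K L P t tau)
           / (1 + (K%:R)^-1 * \tr (Dm R B M K L P C a tau j *m TP R B M K L P t tau)))
    & 0 < derive1 Rb tau].
Proof.
move=> B_gt0 M_gt0 K_gt0 L_gt0 P_gt0 C_gt0 a_gt0 T_sol tau_gt0 _ Rb.
have RbD := Rbar_is_derive M_gt0 K_gt0 L_gt0 P_gt0 C_gt0 a_gt0 T_sol tau_gt0.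
rewrite derive1E (@derive_val _ _ _ _ _ _ _ RbD); split.
- exact: (@ex_derive _ _ _ _ _ _ _ RbD).
- by congr (_ * _); apply: eq_bigr => j _; rewrite -!tr_diag_TP.
- exact: Rbar_slope_gt0.
Qed.
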